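(* Let $\mathbb{F}=\mathbb{F}_q$ be a finite field with $q$ elements, $m>1$ an integer, and $R=\mathbb{F}^{m\times m}$. Then the normalized homogeneous weight $\omega$ on $R$ is given by \[ \omega(A)=\frac{(-1)^{r+1}q^{\binom{r}{2}}}{\alpha_r(q^m)}+1,\qquad\text{where } r=\mathrm{rk}(A), \] for every $A\in R$.
   Context: $\alpha_r(x)=\prod_{i=0}^{r-1}(x-q^i)$ (so $\alpha_0=1$), and $\binom{r}{2}=r(r-1)/2$. The normalized homogeneous weight on a finite Frobenius ring $R$ is the unique map $\omega:R\to\mathbb{R}$ with $\omega(0)=0$, $\omega(x)=\omega(y)$ whenever $Rx=Ry$, and $\sum_{y\in Rx}\omega(y)=|Rx|$ for every $x\in R\setminus\{0\}$. *)

From HB Require Import structures.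
From mathcomp Require Import all_boot all_order all_algebra all_field.
Set Implicit Arguments. Unset Strict Implicit. Unset Printing Implicit Defensive.
Import Order.TTheory GRing.Theory Num.Theory.
Local Open Scope ring_scope.

(* The ring R = F^{m x m} of m x m matrices over a finite field F.
   (For generic m, MathComp does not provide a finPzRingType instance on
   'M[F]_m, so the notions below are stated directly for this ring, with
   ring multiplication given by matrix product *m.) *)

Definition lideal (F : finFieldType) (m : nat) (x : 'M[F]_m) : {set 'M[F]_m} :=
  [set r *m x | r : 'M[F]_m].

Definition normalized_homogeneous_weight (K : realFieldType) (F : finFieldType)
    (m : nat) (w : 'M[F]_m -> K) : Prop :=
  [/\ w 0 = 0,
      (forall x y : 'M[F]_m, lideal x = lideal y -> w x = w y) &
      (forall x : 'M[F]_m, x != 0 ->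
         \sum_(y in lideal x) w y = (#|lideal x|)%:R)].

Definition alpha (K : realFieldType) (q r : nat) (x : K) : K :=
  \prod_(i < r) (x - (q ^ i)%:R).

Definition hw_formula (K : realFieldType) (q m r : nat) : K :=
  (-1) ^+ r.+1 * (q ^ 'C(r, 2))%:R / alpha q r ((q ^ m)%:R) + 1.

From HB Require Import structures.
From mathcomp Require Import all_boot all_order all_algebra all_field.
From mathcomp Require Import ring zify.
Set Implicit Arguments. Unset Strict Implicit. Unset Printing Implicit Defensive.
Import Order.TTheory GRing.Theory Num.Theory.
Local Open Scope ring_scope.

(* Write [hw_formula r = 1 - mu r] with [mu r = (-1)^r q^C(r,2) / alpha_r(q^m)].
   The left ideal [R A] is the set of matrices whose row space lies in that of
   [A]; choosing a basis of rows identifies it with [F^(m x rank A)], ranks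
   included.  Summing [mu] over [F^(m x r)] for [r > 0] gives [0]: transposing
   and splitting off the first row, a row lying in the row space of an [s]-rank
   remainder ([q^s] choices) keeps the rank, any other row ([q^m - q^s]
   choices) raises it, and [q^s mu s + (q^m - q^s) mu (s+1) = 0].  Hence the
   formula sums to [|R A|] on every nonzero [R A].  Uniqueness is by induction
   on the rank: in [sum_(y in R A) w y = |R A|] every [y] generating a smaller
   ideal has smaller rank, and the remaining [y] all carry the value [w A]. *)

Definition hw_mobius (K : realFieldType) (q m s : nat) : K :=
  (-1) ^+ s * (q ^ 'C(s, 2))%:R / alpha q s ((q ^ m)%:R).

Lemma hw_formulaE (K : realFieldType) q m s :
  hw_formula K q m s = 1 - hw_mobius K q m s.
Proof. rewrite /hw_formula /hw_mobius exprS; ring. Qed.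

Lemma hw_formula0 (K : realFieldType) q m : hw_formula K q m 0 = 0.
Proof. by rewrite hw_formulaE /hw_mobius /alpha big_ord0 expr0 mul1r divr1 subrr. Qed.

Section Mobius.

Variables (K : realFieldType) (q m : nat).
Hypothesis q_gt1 : (1 < q)%N.

Lemma natr_expn_sub_neq0 s : (s < m)%N -> ((q ^ m)%:R - (q ^ s)%:R : K) != 0.
Proof. by move=> ltsm; rewrite subr_eq0 eqr_nat eqn_exp2l // neq_ltn ltsm orbT. Qed.

Lemma alpha_neq0 s : (s <= m)%N -> alpha q s ((q ^ m)%:R : K) != 0.
Proof.
elim: s => [|s IHs] lesm; first by rewrite /alpha big_ord0 oner_eq0.
by rewrite /alpha big_ord_recr /= mulf_neq0 ?IHs ?natr_expn_sub_neq0 // ltnW.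
Qed.

Lemma hw_mobiusS s : (s < m)%N ->
  (q ^ s)%:R * hw_mobius K q m s + ((q ^ m)%:R - (q ^ s)%:R) * hw_mobius K q m s.+1 = 0.
Proof.
move=> ltsm; have := alpha_neq0 (ltnW ltsm); have := natr_expn_sub_neq0 ltsm.
rewrite /hw_mobius binS bin1 expnD natrM /alpha big_ord_recr /= exprS.
by move=> step_neq0 alpha_s_neq0; field; rewrite alpha_s_neq0 step_neq0.
Qed.

End Mobius.

Lemma big_submx_row_base (K : nmodType) (F : finFieldType) (p n k : nat)
    (X : 'M[F]_(k, n)) (G : 'M[F]_(p, n) -> K) :
  \sum_(y | (y <= X)%MS) G y = \sum_(C : 'M[F]_(p, \rank X)) G (C *m row_base X).
Proof.
rewrite -(big_imset G (in2W (row_free_inj (row_base_free X)))) /=.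
apply: eq_bigl => y; apply/idP/imsetP.
  by rewrite -{1}(eq_row_base X) => /submxP[C ->]; exists C.
by move=> [C _ ->]; rewrite (submx_trans (submxMl C _)) ?eq_row_base.
Qed.

Lemma sumr_const_submx (K : nmodType) (F : finFieldType) (p n k : nat)
    (X : 'M[F]_(k, n)) (c : K) :
  \sum_(y : 'M[F]_(p, n) | (y <= X)%MS) c = c *+ (#|F| ^ (p * \rank X)).
Proof. by rewrite (big_submx_row_base X (fun=> c)) sumr_const card_mx. Qed.

Lemma rank_col_mx_submx (F : fieldType) n k (v : 'rV[F]_n) (M : 'M[F]_(k, n)) :
  (v <= M)%MS -> \rank (col_mx v M) = \rank M.
Proof.
move=> vM; rewrite -addsmxE; apply: eqmx_rank.
by rewrite /eqmx addsmx_sub vM submx_refl addsmxSr.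
Qed.

Lemma rank_col_mx_notsubmx (F : fieldType) n k (v : 'rV[F]_n) (M : 'M[F]_(k, n)) :
  ~~ (v <= M)%MS -> \rank (col_mx v M) = (\rank M).+1.
Proof.
move=> vNM; rewrite -addsmxE.
have [leM eqM] := mxrank_leqif_sup (addsmxSr v M).
have [leD _] := mxrank_adds_leqif v M.
have rank_v := rank_leq_row v.
have : \rank M != \rank (v + M)%MS.
  by rewrite eqM; apply: contra vNM; apply: submx_trans (addsmxSl v M).
lia.
Qed.

Section MobiusSums.

Variables (K : realFieldType) (F : finFieldType) (m : nat).
Let q := #|F|.
Let mu s := hw_mobius K q m s.
Let q_gt1 : (1 < q)%N := card_finNzRing_gt1 F.

Lemma sum_hw_mobius_col_mx k (M : 'M[F]_(k, m)) : (\rank M < m)%N ->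
  \sum_(v : 'rV[F]_m) mu (\rank (col_mx v M)) = 0.
Proof.
move=> ltMm; rewrite (bigID (fun v : 'rV[F]_m => (v <= M)%MS)) /=.
rewrite (eq_bigr (fun=> mu (\rank M))) => [|v /rank_col_mx_submx ->] //.
rewrite [X in _ + X](eq_bigr (fun=> mu (\rank M).+1)) => [|v /rank_col_mx_notsubmx ->] //.
set b := mu (\rank M).+1.
have split_all : \sum_(v : 'rV[F]_m) b
    = \sum_(v : 'rV[F]_m | (v <= M)%MS) b + \sum_(v : 'rV[F]_m | ~~ (v <= M)%MS) b.
  exact: bigID.
rewrite sumr_const card_mx mul1n sumr_const_submx mul1n in split_all.
have -> : \sum_(v : 'rV[F]_m | ~~ (v <= M)%MS) b = ((q ^ m)%:R - (q ^ \rank M)%:R) * b.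
  by rewrite mulrBl !mulr_natl split_all addrC addKr.
by rewrite sumr_const_submx mul1n -[RHS](hw_mobiusS K q_gt1 ltMm) mulr_natl.
Qed.

Lemma sum_hw_mobius_rows k : (k < m)%N ->
  \sum_(D : 'M[F]_(k.+1, m)) mu (\rank D) = 0.
Proof.
move=> ltkm; have -> : \sum_(D : 'M[F]_(1 + k, m)) mu (\rank D)
    = \sum_(v : 'rV[F]_m) \sum_(M : 'M[F]_(k, m)) mu (\rank (col_mx v M)).
  rewrite pair_big (reindex (fun vM : 'rV[F]_m * 'M[F]_(k, m) => col_mx vM.1 vM.2)) //.
  exists (fun D : 'M[F]_(1 + k, m) => (usubmx D, dsubmx D)) => [[v M] _ | D _] /=.
    by rewrite col_mxKu col_mxKd.
  by rewrite vsubmxK.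
rewrite exchange_big big1 // => M _.
by apply: sum_hw_mobius_col_mx; rewrite (leq_ltn_trans (rank_leq_row M)).
Qed.

Lemma sum_hw_mobius_cols r : (0 < r <= m)%N ->
  \sum_(C : 'M[F]_(m, r)) mu (\rank C) = 0.
Proof.
case: r => // k /= ltkm; rewrite -[RHS](sum_hw_mobius_rows ltkm).
rewrite [RHS](reindex (@trmx F m k.+1)) /=; last by exists (@trmx F k.+1 m) => C _; rewrite trmxK.
by apply: eq_bigr => C _; rewrite mxrank_tr.
Qed.

Lemma mem_lideal (x y : 'M[F]_m) : (y \in lideal x) = (y <= x)%MS.
Proof. by apply/imsetP/submxP => [[D _ ->] | [D ->]]; exists D. Qed.

Lemma sum_lideal_hw_mobius (x : 'M[F]_m) : x != 0 ->
  \sum_(y in lideal x) mu (\rank y) = 0.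
Proof.
move=> x_neq0; rewrite (eq_bigl (fun y => (y <= x)%MS)) => [|y]; last exact: mem_lideal.
rewrite big_submx_row_base.
under eq_bigr => C _ do rewrite mxrankMfree ?row_base_free //.
by apply: sum_hw_mobius_cols; rewrite lt0n mxrank_eq0 x_neq0 rank_leq_row.
Qed.

Lemma lideal_eq_eqmx (x y : 'M[F]_m) : (lideal x == lideal y) = (x == y)%MS.
Proof.
apply/eqP/andP => [exy | [xy yx]].
  by rewrite -!mem_lideal; split; [rewrite -exy | rewrite exy]; rewrite mem_lideal.
apply/setP => z; rewrite !mem_lideal.
by apply/idP/idP => zx; [exact: submx_trans zx xy | exact: submx_trans zx yx].
Qed.

Lemma hw_formula_homogeneous :
  normalized_homogeneous_weight (fun A : 'M[F]_m => hw_formula K q m (\rank A)).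
Proof.
split=> [|x y /eqP | x x_neq0]; first by rewrite mxrank0 hw_formula0.
  by rewrite lideal_eq_eqmx => /eqmx_rank ->.
under eq_bigr => y _ do rewrite hw_formulaE.
by rewrite sumrB sum_lideal_hw_mobius // subr0 sumr_const.
Qed.

End MobiusSums.

Lemma normalized_homogeneous_weight_unique (K : realFieldType) (F : finFieldType)
    (m : nat) (w1 w2 : 'M[F]_m -> K) :
  normalized_homogeneous_weight w1 -> normalized_homogeneous_weight w2 -> w1 =1 w2.
Proof.
move=> [w1_0 w1_lideal w1_sum] [w2_0 w2_lideal w2_sum] A.
move: {-1}(\rank A) (erefl (\rank A)) => r; elim/ltn_ind: r A => r IHr A rankA.
have [-> | A_neq0] := eqVneq A 0; first by rewrite w1_0 w2_0.
pose top := [set y in lideal A | lideal y == lideal A].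
have sum_top (w : 'M[F]_m -> K) : (forall y, lideal y = lideal A -> w y = w A) ->
    \sum_(y in lideal A | lideal y == lideal A) w y = w A *+ #|top|.
  move=> w_top; rewrite -sumr_const; apply: eq_big => [y | y /andP[_ /eqP]].
    by rewrite inE.
  exact: w_top.
have low_eq y : y \in lideal A -> lideal y != lideal A -> w1 y = w2 y.
  rewrite mem_lideal lideal_eq_eqmx => yA yNA; apply: (IHr _ _ y erefl).
  by rewrite -rankA; apply: rank_ltmx; rewrite ltmxEneq yNA yA.
have := w1_sum A A_neq0; rewrite -(w2_sum A A_neq0).
rewrite [X in X = _ -> _](bigID (fun y => lideal y == lideal A)) /=.
rewrite [X in _ = X -> _](bigID (fun y => lideal y == lideal A)) /=.
rewrite (sum_top w1 (w1_lideal^~ A)) (sum_top w2 (w2_lideal^~ A)).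
rewrite (eq_bigr w2) => [|y /andP[]]; last exact: low_eq.
move/addIr/pmulrnI; apply; rewrite card_gt0; apply/set0Pn; exists A.
by rewrite inE mem_lideal submx_refl eqxx.
Qed.

Theorem theorem3p2 (K : realFieldType) (F : finFieldType) (m : nat)
    (hm : (1 < m)%N) :
  let q := #|F| in
  normalized_homogeneous_weight (fun A : 'M[F]_m => hw_formula K q m (\rank A)) /\
  (forall w : 'M[F]_m -> K, normalized_homogeneous_weight w ->
    forall A : 'M[F]_m, w A = hw_formula K q m (\rank A)).
Proof.
(* The formula is the weight for every [m]. *)
move=> q; have hw_formula_weight := @hw_formula_homogeneous K F m.
split=> // w w_weight.
exact: normalized_homogeneous_weight_unique w_weight hw_formula_weight.
Qed.
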